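(* For complex numbers $x,y$ with $y\neq 0$, define \[ A(x,y)=\sum_{n=0}^{\infty} x^n\binom{2n}{n}\sum_{k=0}^n\binom{n}{k}^2\binom{2k}{n}(-1)^k y^{2k-n}. \] If $x$ and $y$ are such that this double series converges absolutely, then \[ A(x,y)=\sum_{k=0}^{\infty}(-xy)^k\binom{2k}{k}^2 P_{2k}\!\left(\sqrt{1+\frac{4x}{y}}\right), \] where $P_m$ denotes the $m$-th Legendre polynomial.
   Context: $\binom{2k}{n}=0$ for $n>2k$. Since $P_{2k}$ is an even polynomial, the choice of square root is immaterial. *)

From Stdlib Require Import Reals.
From Coquelicot Require Import Coquelicot.

(* natural-number binomial coefficient, with binom n k = 0 for k > n *)
Fixpoint binom (n k : nat) : nat :=
  match n, k with
  | _, O => 1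
  | O, S _ => 0
  | S n', S k' => binom n' k' + binom n' (S k')
  end.

Definition Cnat (m : nat) : C := RtoC (INR m).

Definition Czpow (y : C) (a b : nat) : C :=
  if Nat.leb b a then pow_n (K := C_Ring) y (a - b)
  else Cinv (pow_n (K := C_Ring) y (b - a)).

(* Legendre polynomials via Bonnet's recurrence:
   P_0 = 1, P_1 = t, (n+2) P_{n+2} = (2n+3) t P_{n+1} - (n+1) P_n.
   legendre_pair n t = (P_n(t), P_{n+1}(t)). *)
Fixpoint legendre_pair (n : nat) (t : C) : C * C :=
  match n with
  | O => (RtoC 1, t)
  | S n' =>
      let (p, q) := legendre_pair n' t in
      (q, Cdiv (Cminus (Cmult (Cmult (Cnat (2 * n' + 3)) t) q)
                       (Cmult (Cnat (n' + 1)) p))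
               (Cnat (n' + 2)))
  end.

Definition legendreP (m : nat) (t : C) : C := fst (legendre_pair m t).

Definition A_term (x y : C) (n k : nat) : C :=
  Cmult (Cmult (pow_n (K := C_Ring) x n) (Cnat (binom (2 * n) n)))
    (Cmult (Cmult (Cnat (binom n k ^ 2)) (Cnat (binom (2 * k) n)))
       (Cmult (pow_n (K := C_Ring) (Copp (RtoC 1)) k) (Czpow y (2 * k) n))).

Definition A_row (x y : C) (n : nat) : C :=
  sum_n (fun k => A_term x y n k) n.

Definition A_abs_conv (x y : C) : Prop :=
  ex_series (fun n => sum_n (fun k => Cmod (A_term x y n k)) n).

From Stdlib Require Import Arith Reals Lra Lia.
From Coquelicot Require Import Coquelicot.

(* P_2k(w) is a polynomial in s = w^2 - 1, which here equals 4x/y: Bonnet's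
   recurrence, run two steps at a time while carrying P_(2k+1)/w along, gives
   P_2k(w) = sum_j C(k,j) ((k+1/2)_j / j!) s^j.  Multiplied by (-xy)^k C(2k,k)^2, the
   j-th term of this sum is exactly the (n,k) = (k+j,k) term of the double series
   defining A(x,y).  So the Legendre series is the double series summed by columns,
   and its terms vanish unless k <= n <= 2k.  The first K columns differ from the
   first 2K rows by a block lying in rows K+1..2K, which absolute convergence makes
   small. *)

Lemma sum_n_zero_tail {G : AbelianMonoid} (f : nat -> G) N M :
  (forall i, (N < i)%nat -> f i = zero) -> (N <= M)%nat -> sum_n f M = sum_n f N.
Proof.
  intros Hf HNM; induction HNM as [|M HNM IHM]; [reflexivity|].
  rewrite sum_Sn, IHM, Hf by lia; apply plus_zero_r.
Qed.

Lemma sum_n_le_sum_n_of_nonneg (a : nat -> R) N M :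
  (forall n, 0 <= a n) -> (N <= M)%nat -> sum_n a N <= sum_n a M.
Proof.
  intros Ha HNM; induction HNM as [|M HNM IHM]; [lra|].
  rewrite sum_Sn; specialize (Ha (S M)); change (sum_n a N <= sum_n a M + a (S M)); lra.
Qed.

Lemma minus_plus_cancel_l {G : AbelianGroup} (a b : G) : minus a (plus a b) = opp b.
Proof.
  unfold minus; rewrite opp_plus, plus_assoc.
  transitivity (plus zero (opp b)); [|apply plus_zero_l].
  f_equal; apply plus_opp_r.
Qed.

Lemma sum_n_shift_zero_head {G : AbelianMonoid} (f : nat -> G) k m :
  (forall n, (n < k)%nat -> f n = zero) -> sum_n f (k + m) = sum_n (fun j => f (k + j)%nat) m.
Proof.
  revert f; induction k as [|k IHk]; intros f Hf; [reflexivity|].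
  unfold sum_n; rewrite Nat.add_succ_l, sum_Sn_m, <- sum_n_m_S, Hf, plus_zero_l by lia.
  apply (IHk (fun i => f (S i))); intros n Hn; apply Hf; lia.
Qed.

Section BandedDoubleSums.

Context {G : AbelianMonoid} (t : nat -> nat -> G).
Hypothesis t_above_diag : forall n k, (n < k)%nat -> t n k = zero.
Hypothesis t_below_band : forall n k, (2 * k < n)%nat -> t n k = zero.

Lemma banded_rows_split K :
  sum_n (fun n => sum_n (t n) n) (2 * K) =
  plus (sum_n (fun k => sum_n (fun n => t n k) (2 * k)) K)
       (sum_n_m (fun k => sum_n (fun n => t n k) (2 * K)) (S K) (2 * K)).
Proof.
  transitivity (sum_n (fun n => sum_n (t n) (2 * K)) (2 * K)).
  { apply sum_n_ext_loc; intros n Hn; symmetry.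
    apply sum_n_zero_tail; [intros k Hk; apply t_above_diag|]; lia. }
  rewrite sum_n_switch; unfold sum_n at 1.
  rewrite (sum_n_m_Chasles _ 0 K (2 * K)) by lia.
  f_equal; apply sum_n_m_ext_loc; intros k Hk.
  apply sum_n_zero_tail; [intros n Hn; apply t_below_band|]; lia.
Qed.

End BandedDoubleSums.

Lemma banded_tail_le (u : nat -> nat -> R) K :
  (forall n k, 0 <= u n k) ->
  (forall n k, (n < k)%nat -> u n k = 0) ->
  (forall n k, (2 * k < n)%nat -> u n k = 0) ->
  sum_n_m (fun k => sum_n (fun n => u n k) (2 * K)) (S K) (2 * K)
  <= sum_n_m (fun n => sum_n (u n) n) (S K) (2 * K).
Proof.
  intros Hpos Habove Hbelow.
  pose proof (banded_rows_split u Habove Hbelow K) as Hsplit.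
  assert (Hchasles : sum_n (fun n => sum_n (u n) n) (2 * K) =
    plus (sum_n (fun n => sum_n (u n) n) K) (sum_n_m (fun n => sum_n (u n) n) (S K) (2 * K)))
    by (apply sum_n_m_Chasles; lia).
  assert (Hrows : sum_n (fun n => sum_n (u n) n) K
                  <= sum_n (fun k => sum_n (fun n => u n k) (2 * k)) K).
  { transitivity (sum_n (fun k => sum_n (fun n => u n k) K) K).
    { rewrite <- sum_n_switch; apply Req_le, sum_n_ext_loc; intros n Hn; symmetry.
      apply sum_n_zero_tail; [intros k Hk; apply Habove|]; lia. }
    rewrite !sum_n_Reals; apply sum_Rle; intros k Hk; cbv beta.
    rewrite <- (sum_n_zero_tail _ (2 * k) (2 * K)) by (intros; try apply Hbelow; lia).
    apply sum_n_le_sum_n_of_nonneg; [intros; apply Hpos | lia]. }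
  rewrite Hchasles in Hsplit; change (plus ?a ?b) with (a + b) in Hsplit; lra.
Qed.

Theorem is_series_banded_columns {K : AbsRing} {V : NormedModule K}
    (t : nat -> nat -> V) (A : V) :
  (forall n k, (n < k)%nat -> t n k = zero) ->
  (forall n k, (2 * k < n)%nat -> t n k = zero) ->
  ex_series (fun n => sum_n (fun k => norm (t n k)) n) ->
  is_series (fun n => sum_n (t n) n) A ->
  is_series (fun k => sum_n (fun n => t n k) (2 * k)) A.
Proof.
  intros Habove Hbelow Habs HA.
  set (abs_row := fun n => sum_n (fun k => norm (t n k)) n).
  apply (proj2 (filterlim_locally_ball_norm _ _)); intros eps.
  assert (Heps2 : 0 < eps / 2) by (destruct eps; simpl; lra).
  destruct (proj1 (filterlim_locally_ball_norm _ _) HA (mkposreal _ Heps2)) as [N1 HN1].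
  destruct (Cauchy_ex_series _ Habs (mkposreal _ Heps2)) as [N2 HN2].
  exists (max N1 N2); intros M HM.
  set (D := sum_n_m (fun k => sum_n (fun n => t n k) (2 * M)) (S M) (2 * M)).
  assert (HD : norm D <= sum_n_m abs_row (S M) (2 * M)).
  { eapply Rle_trans; [apply norm_sum_n_m|].
    eapply Rle_trans; [apply sum_n_m_le; intros k; apply norm_sum_n_m|].
    apply (banded_tail_le (fun n k => norm (t n k))).
    - intros; apply norm_ge_0.
    - intros n k Hnk; rewrite Habove by exact Hnk; apply norm_zero.
    - intros n k Hnk; rewrite Hbelow by exact Hnk; apply norm_zero. }
  assert (Hrows : norm (minus (sum_n (fun n => sum_n (t n) n) (2 * M)) A) < eps / 2)
    by (apply (HN1 (2 * M)%nat); lia).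
  assert (Htail : sum_n_m abs_row (S M) (2 * M) < eps / 2).
  { eapply Rle_lt_trans; [apply Rle_abs|]; apply (HN2 (S M) (2 * M)%nat); lia. }
  set (cols := sum_n (fun k => sum_n (fun n => t n k) (2 * k)) M).
  assert (Hsplit : sum_n (fun n => sum_n (t n) n) (2 * M) = plus cols D)
    by apply (banded_rows_split t Habove Hbelow M).
  assert (HcolsD : minus cols (plus cols D) = opp D)
    by exact (minus_plus_cancel_l cols D).
  rewrite Hsplit in Hrows; unfold ball_norm.
  rewrite (minus_trans (plus cols D)), HcolsD.
  eapply Rle_lt_trans; [apply norm_triangle|]; rewrite norm_opp; simpl in *; lra.
Qed.

Lemma binom_gt n k : (n < k)%nat -> binom n k = 0%nat.
Proof.
  revert k; induction n as [|n IHn]; intros [|k] Hk; simpl; try lia; try reflexivity.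
  rewrite !IHn; lia.
Qed.

Lemma binom_n_0 n : binom n 0 = 1%nat.
Proof. now destruct n. Qed.

Lemma INR_binom n k : (k <= n)%nat -> INR (binom n k) = Binomial.C n k.
Proof.
  revert k; induction n as [|n IHn]; intros [|k] Hk.
  - now rewrite C_n_0.
  - lia.
  - now rewrite C_n_0.
  - cbn [binom]; rewrite plus_INR.
    destruct (Nat.eq_dec k n) as [->|Hkn].
    + rewrite (binom_gt n (S n)), IHn, !C_n_n by lia; simpl; ring.
    + rewrite !IHn by lia; apply pascal; lia.
Qed.

Lemma binom_absorb_INR k i :
  INR (S i) * INR (binom k (S i)) = (INR k - INR i) * INR (binom k i).
Proof.
  destruct (lt_eq_lt_dec i k) as [[Hik| ->]|Hki].
  - rewrite !INR_binom, pascal_step3, minus_INR by lia.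
    rewrite S_INR; field; pose proof (pos_INR i); lra.
  - rewrite binom_gt by lia; simpl; ring.
  - rewrite !binom_gt by lia; simpl; ring.
Qed.

Lemma binom_succ_INR k j :
  INR (S k) * INR (binom k j) = (INR (S k) - INR j) * INR (binom (S k) j).
Proof.
  destruct (le_lt_dec j k) as [Hjk|Hkj].
  - rewrite !INR_binom, pascal_step2, minus_INR by lia.
    rewrite !S_INR; apply le_INR in Hjk; field; lra.
  - destruct (Nat.eq_dec j (S k)) as [->|Hj].
    + rewrite binom_gt by lia; simpl; ring.
    + rewrite !binom_gt by lia; simpl; ring.
Qed.

(* [half_pochhammer k j = (k + 1/2)_j / j!]. *)
Fixpoint half_pochhammer (k j : nat) : R :=
  match j with
  | O => 1
  | S i => half_pochhammer k i * (2 * INR k + 2 * INR i + 1) / (2 * INR i + 2)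
  end.

Lemma half_pochhammer_succ k j :
  half_pochhammer (S k) j * (2 * INR k + 1) =
  half_pochhammer k j * (2 * INR k + 2 * INR j + 1).
Proof.
  induction j as [|j IHj]; cbn [half_pochhammer]; [simpl; ring|].
  pose proof (pos_INR j); pose proof (pos_INR k); rewrite !S_INR.
  replace (half_pochhammer (S k) j)
    with (half_pochhammer k j * (2 * INR k + 2 * INR j + 1) / (2 * INR k + 1))
    by (rewrite <- IHj; field; lra).
  field; lra.
Qed.

Lemma half_pochhammer_fact k j :
  half_pochhammer k j * INR (fact (2 * k)) * 4 ^ j * INR (fact (k + j)) * INR (fact j)
  = INR (fact (2 * k + 2 * j)) * INR (fact k).
Proof.
  pose proof (INR_fact_neq_0 (2 * k)).
  induction j as [|j IHj]; cbn [half_pochhammer].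
  - rewrite !Nat.add_0_r; simpl; ring.
  - pose proof (INR_fact_neq_0 (k + j)); pose proof (INR_fact_neq_0 j).
    pose proof (pow_nonzero 4 j ltac:(lra)); pose proof (pos_INR j).
    replace (half_pochhammer k j) with (INR (fact (2 * k + 2 * j)) * INR (fact k)
      / (INR (fact (2 * k)) * 4 ^ j * INR (fact (k + j)) * INR (fact j)))
      by (rewrite <- IHj; field; tauto).
    replace (k + S j)%nat with (S (k + j)) by lia.
    replace (2 * k + 2 * S j)%nat with (S (S (2 * k + 2 * j))) by lia.
    rewrite !fact_simpl, !mult_INR, !S_INR, !plus_INR, !mult_INR, <- tech_pow_Rmult.
    set (F := INR (fact (2 * k + 2 * j))) in *; set (G := INR (fact (2 * k))) in *.
    simpl INR; field; repeat split; lra.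
Qed.

Definition legendre_even_coef (k j : nat) : R := INR (binom k j) * half_pochhammer k j.
Definition legendre_odd_coef (k j : nat) : R := INR (binom k j) * half_pochhammer (S k) j.

Lemma legendre_even_coef_gt k j : (k < j)%nat -> legendre_even_coef k j = 0.
Proof. intros Hkj; unfold legendre_even_coef; rewrite binom_gt by lia; simpl; ring. Qed.

Lemma legendre_odd_coef_gt k j : (k < j)%nat -> legendre_odd_coef k j = 0.
Proof. intros Hkj; unfold legendre_odd_coef; rewrite binom_gt by lia; simpl; ring. Qed.

Definition coef_shift (a : nat -> R) (j : nat) : R :=
  match j with O => 0 | S i => a i end.

Lemma legendre_even_coef_rec k j :
  INR (2 * k + 2) * legendre_even_coef (S k) j =
  INR (2 * (2 * k) + 3) * (legendre_odd_coef k j + coef_shift (legendre_odd_coef k) j)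
  - INR (2 * k + 1) * legendre_even_coef k j.
Proof.
  unfold legendre_even_coef, legendre_odd_coef.
  rewrite !plus_INR, !mult_INR; cbn [INR].
  destruct j as [|i]; cbn [coef_shift binom half_pochhammer].
  { rewrite binom_n_0; simpl; ring. }
  pose proof (half_pochhammer_succ k i) as Hsucc.
  pose proof (binom_absorb_INR k i) as Habs.
  pose proof (pos_INR k); pose proof (pos_INR i).
  rewrite plus_INR, !S_INR in *.
  replace (INR (binom k (S i))) with ((INR k - INR i) * INR (binom k i) / (INR i + 1))
    by (rewrite <- Habs; field; lra).
  replace (half_pochhammer (S k) i) with
    (half_pochhammer k i * (2 * INR k + 2 * INR i + 1) / (2 * INR k + 1))
    by (rewrite <- Hsucc; field; lra).
  field; lra.
Qed.

Lemma legendre_odd_coef_rec k j :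
  INR (S (2 * k) + 2) * legendre_odd_coef (S k) j =
  INR (2 * S (2 * k) + 3) * legendre_even_coef (S k) j
  - INR (S (2 * k) + 1) * legendre_odd_coef k j.
Proof.
  unfold legendre_even_coef, legendre_odd_coef.
  pose proof (half_pochhammer_succ (S k) j) as Hsucc.
  pose proof (binom_succ_INR k j) as Hbin.
  pose proof (pos_INR k); pose proof (pos_INR j).
  rewrite !plus_INR, !mult_INR, !S_INR, mult_INR in *; cbn [INR] in *.
  replace (INR (binom k j)) with ((INR k + 1 - INR j) * INR (binom (S k) j) / (INR k + 1))
    by (rewrite <- Hbin; field; lra).
  replace (half_pochhammer (S (S k)) j) with
    (half_pochhammer (S k) j * (2 * (INR k + 1) + 2 * INR j + 1) / (2 * (INR k + 1) + 1))
    by (rewrite <- Hsucc; field; lra).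
  field; lra.
Qed.

Local Open Scope C_scope.

Definition poly_eval (a : nat -> R) (N : nat) (s : C) : C :=
  sum_n (fun j => a j * s ^ j) N.

Lemma poly_eval_0 a s : poly_eval a 0 s = a O.
Proof. unfold poly_eval; rewrite sum_O; simpl; ring. Qed.

Lemma poly_eval_S a N s : poly_eval a (S N) s = poly_eval a N s + a (S N) * s ^ S N.
Proof. unfold poly_eval; now rewrite sum_Sn. Qed.

Lemma poly_eval_ext_le a b N s :
  (forall j, (j <= N)%nat -> a j = b j) -> poly_eval a N s = poly_eval b N s.
Proof. intros Hab; apply sum_n_ext_loc; intros j Hj; now rewrite Hab. Qed.

Lemma poly_eval_plus a b N s :
  poly_eval (fun j => a j + b j)%R N s = poly_eval a N s + poly_eval b N s.
Proof.
  induction N as [|N IHN]; rewrite ?poly_eval_0, ?poly_eval_S, ?IHN, RtoC_plus; ring.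
Qed.

Lemma poly_eval_scal r a N s :
  poly_eval (fun j => r * a j)%R N s = r * poly_eval a N s.
Proof.
  induction N as [|N IHN]; rewrite ?poly_eval_0, ?poly_eval_S, ?IHN, RtoC_mult; ring.
Qed.

Lemma poly_eval_minus a b N s :
  poly_eval (fun j => a j - b j)%R N s = poly_eval a N s - poly_eval b N s.
Proof.
  induction N as [|N IHN]; rewrite ?poly_eval_0, ?poly_eval_S, ?IHN, RtoC_minus; ring.
Qed.

Lemma poly_eval_extend a N s : a (S N) = 0%R -> poly_eval a (S N) s = poly_eval a N s.
Proof. intros Ha; rewrite poly_eval_S, Ha; ring. Qed.

Lemma poly_eval_shift a N s : s * poly_eval a N s = poly_eval (coef_shift a) (S N) s.
Proof.
  induction N as [|N IHN].
  - rewrite poly_eval_S, !poly_eval_0; simpl; ring.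
  - rewrite poly_eval_S, (poly_eval_S _ (S N)), <- IHN; simpl; ring.
Qed.

Lemma legendre_even_poly_step k s :
  Cnat (2 * k + 2) * poly_eval (legendre_even_coef (S k)) (S k) s =
  Cnat (2 * (2 * k) + 3) * ((1 + s) * poly_eval (legendre_odd_coef k) k s)
  - Cnat (2 * k + 1) * poly_eval (legendre_even_coef k) k s.
Proof.
  unfold Cnat; rewrite <- poly_eval_scal.
  rewrite (poly_eval_ext_le _ _ _ _ (fun j _ => legendre_even_coef_rec k j)).
  rewrite poly_eval_minus, !poly_eval_scal, poly_eval_plus, <- poly_eval_shift.
  rewrite (poly_eval_extend (legendre_odd_coef k)), (poly_eval_extend (legendre_even_coef k))
    by (apply legendre_odd_coef_gt || apply legendre_even_coef_gt; lia).
  ring.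
Qed.

Lemma legendre_odd_poly_step k s :
  Cnat (S (2 * k) + 2) * poly_eval (legendre_odd_coef (S k)) (S k) s =
  Cnat (2 * S (2 * k) + 3) * poly_eval (legendre_even_coef (S k)) (S k) s
  - Cnat (S (2 * k) + 1) * poly_eval (legendre_odd_coef k) k s.
Proof.
  unfold Cnat; rewrite <- poly_eval_scal.
  rewrite (poly_eval_ext_le _ _ _ _ (fun j _ => legendre_odd_coef_rec k j)).
  rewrite poly_eval_minus, !poly_eval_scal, (poly_eval_extend (legendre_odd_coef k))
    by (apply legendre_odd_coef_gt; lia).
  reflexivity.
Qed.

Lemma Cnat_neq_0 n : (0 < n)%nat -> Cnat n <> 0.
Proof. intros Hn E; apply RtoC_inj, (not_0_INR n) in E; [easy | lia]. Qed.

Lemma legendre_pair_S n t :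
  legendre_pair (S n) t =
  (snd (legendre_pair n t),
   (Cnat (2 * n + 3) * t * snd (legendre_pair n t) - Cnat (n + 1) * fst (legendre_pair n t))
   / Cnat (n + 2)).
Proof. simpl; now destruct (legendre_pair n t). Qed.

Lemma legendre_pair_even k w :
  legendre_pair (2 * k) w =
  (poly_eval (legendre_even_coef k) k (w * w - 1),
   w * poly_eval (legendre_odd_coef k) k (w * w - 1)).
Proof.
  set (s := w * w - 1).
  assert (Hw : w * w = 1 + s) by (unfold s; ring).
  induction k as [|k IHk].
  - rewrite !poly_eval_0; unfold legendre_even_coef, legendre_odd_coef; simpl.
    rewrite Rmult_1_l; f_equal; ring.
  - replace (2 * S k)%nat with (S (S (2 * k))) by lia.
    rewrite !legendre_pair_S, IHk; cbn [fst snd].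
    replace (poly_eval (legendre_odd_coef (S k)) (S k) s)
      with ((Cnat (2 * S (2 * k) + 3) * poly_eval (legendre_even_coef (S k)) (S k) s
             - Cnat (S (2 * k) + 1) * poly_eval (legendre_odd_coef k) k s) / Cnat (S (2 * k) + 2))
      by (rewrite <- legendre_odd_poly_step; field; apply Cnat_neq_0; lia).
    replace (poly_eval (legendre_even_coef (S k)) (S k) s)
      with ((Cnat (2 * (2 * k) + 3) * ((w * w) * poly_eval (legendre_odd_coef k) k s)
             - Cnat (2 * k + 1) * poly_eval (legendre_even_coef k) k s) / Cnat (2 * k + 2))
      by (rewrite Hw, <- legendre_even_poly_step; field; apply Cnat_neq_0; lia).
    f_equal; field; repeat split; apply Cnat_neq_0; lia.
Qed.

Lemma legendre_even_coef_binom k j : (j <= k)%nat ->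
  (INR (binom (2 * k) k ^ 2) * legendre_even_coef k j * 4 ^ j =
   INR (binom (2 * (k + j)) (k + j)) * INR (binom (k + j) k ^ 2) * INR (binom (2 * k) (k + j)))%R.
Proof.
  intros Hjk; unfold legendre_even_coef.
  rewrite !pow_INR, !INR_binom by lia; unfold Binomial.C.
  replace (2 * (k + j) - (k + j))%nat with (k + j)%nat by lia.
  replace (k + j - k)%nat with j by lia.
  replace (2 * k - (k + j))%nat with (k - j)%nat by lia.
  replace (2 * k - k)%nat with k by lia.
  replace (2 * (k + j))%nat with (2 * k + 2 * j)%nat by lia.
  pose proof (half_pochhammer_fact k j) as Hfact.
  pose proof (pow_nonzero 4 j ltac:(lra)).
  pose proof (INR_fact_neq_0 (2 * k)); pose proof (INR_fact_neq_0 (k + j)).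
  pose proof (INR_fact_neq_0 j); pose proof (INR_fact_neq_0 k).
  pose proof (INR_fact_neq_0 (k - j)); pose proof (INR_fact_neq_0 (2 * k + 2 * j)).
  replace (half_pochhammer k j) with (INR (fact (2 * k + 2 * j)) * INR (fact k)
    / (INR (fact (2 * k)) * 4 ^ j * INR (fact (k + j)) * INR (fact j)))%R
    by (rewrite <- Hfact; field; tauto).
  field; tauto.
Qed.

Lemma legendre_term_eq_A_term (x y : C) k j : y <> 0 -> (j <= k)%nat ->
  (- (x * y)) ^ k * Cnat (binom (2 * k) k ^ 2) * (legendre_even_coef k j * (4 * x / y) ^ j)
  = A_term x y (k + j) k.
Proof.
  intros Hy Hjk.
  pose proof (f_equal RtoC (legendre_even_coef_binom k j Hjk)) as Hcoef.
  rewrite !RtoC_mult in Hcoef.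
  unfold A_term, Czpow, Cnat.
  rewrite (proj2 (Nat.leb_le (k + j) (2 * k))) by lia.
  replace (2 * k - (k + j))%nat with (k - j)%nat by lia.
  replace (- (x * y)) with (Copp 1 * x * y) by ring.
  change (@pow_n C_Ring) with Cpow.
  unfold Cdiv; rewrite !Cpow_mult_l, Cpow_inv, <- RtoC_pow, Cpow_add_r by exact Hy.
  replace (y ^ k) with (y ^ (k - j) * y ^ j) by (rewrite <- Cpow_add_r; f_equal; lia).
  transitivity (Copp 1 ^ k * x ^ k * x ^ j * y ^ (k - j)
    * (INR (binom (2 * k) k ^ 2) * legendre_even_coef k j * (4 ^ j)%R)).
  { field; now apply Cpow_nz. }
  rewrite Hcoef; ring.
Qed.

Lemma A_term_above_diag x y n k : (n < k)%nat -> A_term x y n k = 0.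
Proof.
  intros Hnk; unfold A_term, Cnat; rewrite (binom_gt n k) by lia; simpl; ring.
Qed.

Lemma A_term_below_band x y n k : (2 * k < n)%nat -> A_term x y n k = 0.
Proof.
  intros Hkn; unfold A_term, Cnat; rewrite (binom_gt (2 * k) n) by lia; simpl; ring.
Qed.

Lemma legendre_series_term (x y w : C) k : y <> 0 -> w * w = 1 + 4 * x / y ->
  (- (x * y)) ^ k * Cnat (binom (2 * k) k ^ 2) * legendreP (2 * k) w
  = sum_n (fun n => A_term x y n k) (2 * k).
Proof.
  intros Hy Hw; unfold legendreP; rewrite legendre_pair_even; cbn [fst].
  replace (w * w - 1) with (4 * x / y) by (rewrite Hw; ring).
  replace (sum_n _ (2 * k)) with (sum_n (fun n => A_term x y n k) (k + k)) by (f_equal; lia).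
  rewrite (sum_n_shift_zero_head _ k k) by (intros n Hn; now apply A_term_above_diag).
  unfold poly_eval; rewrite <- (sum_n_mult_l (K := C_Ring)).
  apply sum_n_ext_loc; intros j Hj; now apply legendre_term_eq_A_term.
Qed.

Theorem proposition2p1 (x y : C) :
  y <> RtoC 0 ->
  A_abs_conv x y ->
  forall w : C, Cmult w w = Cplus (RtoC 1) (Cdiv (Cmult (RtoC 4) x) y) ->
  exists A : C,
    is_series (A_row x y) A /\
    is_series
      (fun k => Cmult (Cmult (pow_n (K := C_Ring) (Copp (Cmult x y)) k)
                             (Cnat (binom (2 * k) k ^ 2)))
                      (legendreP (2 * k) w))
      A.
Proof.
  intros Hy Habs w Hw.
  destruct (ex_series_le (K := C_AbsRing) (V := C_CompleteNormedModule) (A_row x y)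
              (fun n => sum_n (fun k => Cmod (A_term x y n k)) n)) as [A HA].
  { intros n; exact (norm_sum_n_m (V := C_NormedModule) (A_term x y n) 0 n). }
  { exact Habs. }
  exists A; split; [exact HA|].
  apply (is_series_ext (fun k => sum_n (fun n => A_term x y n k) (2 * k))).
  { intros k; change (@pow_n C_Ring) with Cpow; symmetry; now apply legendre_series_term. }
  apply (is_series_banded_columns (V := C_NormedModule) (A_term x y)).
  - exact (A_term_above_diag x y).
  - exact (A_term_below_band x y).
  - exact Habs.
  - exact HA.
Qed.
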